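(* Fix $\alpha\in\mathbb R$, $r\in\mathbb N_0$, and assume (WR$_{\alpha,r}$). Then there is $C_{\alpha,r}>0$ such that for every $f\in\mathcal C^{r+4}_{\alpha,\infty}(\mathbb R^k)$, $$\|Lf\|_{\alpha,r+2}+\|L^2f\|_{\alpha,r}\le C_{\alpha,r}\|f\|_{\alpha,r+4}.$$ In particular $L:\mathcal C^{r+2}_{\alpha,\infty}(\mathbb R^k)\to\mathcal C^r_{\alpha,\infty}(\mathbb R^k)$ is a bounded operator.
   Context: $\mathbb R^k$ Euclidean; $D^jf(x)$ the $j$-th derivative as a symmetric $j$-linear map, $\|\cdot\|$ operator norm. $b=\sigma_0,\dots,\sigma_d:\mathbb R^k\to\mathbb R^k$; $Lf(x)=Df(x)[b(x)]+\frac12\sum_{l=1}^dD^2f(x)[\sigma_l(x),\sigma_l(x)]$. $w_\gamma(x)=(1+|x|^2)^{\gamma/2}$; $\|f\|_{\alpha,k}=\max_{0\le j\le k}\sup_x\|D^jf(x)\|/w_{\alpha-j}(x)$; $\mathcal C^k_{\alpha,\infty}(\mathbb R^k)$ is the space of $f\in C^k$ with $\|f\|_{\alpha,k}<\infty$ and each $\|D^jf\|/w_{\alpha-j}$ ($0\le j\le k$) vanishing at infinity. (WR$_{\alpha,r}$): each $\sigma_j\in C^{r+4}$ with $\|D^q\sigma_j(x)\|\le K_{\alpha,r}w_{1-q}(x)$ for all $x$, $q=0,\dots,r+4$, $j=0..d$, and $D^{r+4}\sigma_j$ globally Hölder of some exponent $\theta\in(0,1)$. *)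

From HB Require Import structures.
From mathcomp Require Import all_boot all_order all_algebra.
From mathcomp Require Import all_classical all_reals all_analysis.
Set Implicit Arguments. Unset Strict Implicit. Unset Printing Implicit Defensive.
Import Order.TTheory GRing.Theory Num.Theory.
Import numFieldNormedType.Exports.
Local Open Scope classical_set_scope.
Local Open Scope ring_scope.

Section Defs.
Variable R : realType.
Variable k : nat.
Local Notation V := 'rV[R]_k.

Definition enorm (v : V) : R := Num.sqrt (\sum_(i < k) v ord0 i ^+ 2).

Definition wgt (gamma : R) (x : V) : R := powR (1 + enorm x ^+ 2) (gamma / 2).

(* iterated directional derivative: D^j f(x)[h_1,...,h_j], hs = [h_1;...;h_j] *)
Fixpoint iderive (W : normedModType R) (f : V -> W) (hs : seq V) : V -> W :=
  match hs with
  | [::] => f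
  | h :: hs' => fun x => derive (iderive f hs') x h
  end.

Fixpoint Ck (W : normedModType R) (n : nat) (f : V -> W) : Prop :=
  match n with
  | 0 => continuous f
  | n'.+1 => (forall x, differentiable f x) /\ forall v : V, Ck n' (fun x => derive f x v)
  end.

Definition mlnorm (W : Type) (nW : W -> R) (j : nat) (A : seq V -> W) : \bar R :=
  ereal_sup [set (nW (A hs))%:E | hs in
             [set hs : seq V | size hs = j /\ all (fun h => enorm h <= 1) hs]].

Definition Dnorm (W : normedModType R) (nW : W -> R) (j : nat) (f : V -> W) (x : V)
  : \bar R := mlnorm nW j (fun hs => iderive f hs x).

Definition wnorm (alpha : R) (n : nat) (f : V -> R) : \bar R :=
  ereal_sup [set e : \bar R | exists (j : nat) (x : V), (j <= n)%N /\
     e = (Dnorm Num.norm j f x * ((wgt (alpha - j%:R) x)^-1)%:E)%E].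

Definition Cspace (alpha : R) (n : nat) (f : V -> R) : Prop :=
  Ck n f /\ (wnorm alpha n f < +oo)%E /\
  forall j : nat, (j <= n)%N ->
    forall eps : R, 0 < eps -> exists M : R, forall x : V, M <= enorm x ->
      (Dnorm Num.norm j f x <= (eps * wgt (alpha - j%:R) x)%:E)%E.

Definition Lgen (d : nat) (b : V -> V) (sig : 'I_d -> V -> V) (f : V -> R) : V -> R :=
  fun x => derive f x (b x)
           + 2^-1 * \sum_(l < d) iderive f [:: sig l x; sig l x] x.

Definition WRcoef (r : nat) (K : R) (s : V -> V) : Prop :=
  Ck (r + 4) s /\
  (forall (q : nat) (x : V), (q <= r + 4)%N ->
      (Dnorm enorm q s x <= (K * wgt (1 - q%:R) x)%:E)%E) /\
  exists theta : R, 0 < theta < 1 /\ exists H : R, forall x y : V,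
    (mlnorm enorm (r + 4) (fun hs => (iderive s hs x - iderive s hs y)%R)
       <= (H * powR (enorm (x - y)) theta)%:E)%E.

End Defs.

From HB Require Import structures.
From mathcomp Require Import all_boot all_order all_algebra.
From mathcomp Require Import all_classical all_reals all_analysis.
From mathcomp Require Import lra ring.
Set Implicit Arguments. Unset Strict Implicit. Unset Printing Implicit Defensive.
Import Order.TTheory GRing.Theory Num.Theory.
Import numFieldNormedType.Exports.
Local Open Scope ring_scope.

(* In coordinates, L f = sum_j b_j d_j f + 1/2 sum_l sum_(i,j) sig_l^i sig_l^j d_i d_j f.
   Under (WR) the q-th derivatives of every coefficient are bounded by K w_(1-q), and the
   j-th derivatives of f by ||f|| w_(alpha-j).  By the Leibniz rule and w_a w_b = w_(a+b),
   each coefficient gains one power of the weight exactly where each derivative of f loses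
   one, so the j-th derivatives of L f are bounded by C ||f|| w_(alpha-j); iterating bounds
   L^2 f.  The same estimate on the complement of a large ball carries the decay at infinity
   from f over to L f. *)

Section WeightedBounds.
Variables (R : realType) (k : nat).
Local Notation V := 'rV[R]_k.

Lemma wgt_gt0 (a : R) (x : V) : 0 < wgt a x.
Proof. by apply: powR_gt0; rewrite ltr_wpDr ?sqr_ge0. Qed.

Lemma wgt_ge0 (a : R) (x : V) : 0 <= wgt a x.
Proof. exact: ltW (wgt_gt0 a x). Qed.

Lemma wgtD (a b : R) (x : V) : wgt a x * wgt b x = wgt (a + b) x.
Proof.
rewrite /wgt mulrDl powRD //; apply/implyP => _.
by rewrite gt_eqF // ltr_wpDr ?sqr_ge0.
Qed.

Lemma wgt0 (x : V) : wgt 0 x = 1.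
Proof. by rewrite /wgt mul0r powRr0. Qed.

Lemma subr_natS (a : R) n : a - n.+1%:R = a - 1 - n%:R.
Proof. by rewrite -addn1 natrD; lra. Qed.

Lemma iderive_rcons (W : normedModType R) (f : V -> W) hs v :
  iderive f (rcons hs v) = iderive (fun x => derive f x v) hs.
Proof. by elim: hs => [//|h hs IH] /=; rewrite IH. Qed.

Lemma Ck_differentiable (W : normedModType R) n (f : V -> W) :
  Ck n.+1 f -> forall x, differentiable f x.
Proof. by case. Qed.

Lemma Ck_derive (W : normedModType R) n (f : V -> W) v :
  Ck n.+1 f -> Ck n (fun x => derive f x v).
Proof. by case=> _; apply. Qed.

Lemma CkW (W : normedModType R) n (f : V -> W) : Ck n.+1 f -> Ck n f.
Proof.
elim: n f => [|n IH] f /= [df Hd]; first by move=> x; exact: differentiable_continuous.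
by split=> // v; exact: IH.
Qed.

Lemma Ck_le (W : normedModType R) m n (f : V -> W) :
  (m <= n)%N -> Ck n f -> Ck m f.
Proof.
move=> /subnK <-; elim: (n - m)%N => // i IH cf; apply: IH.
by apply: CkW; rewrite -addSn.
Qed.

Lemma derive_cst_fun (W : normedModType R) (c : W) (v : V) :
  (fun x => derive (fun _ : V => c) x v) = (fun _ => 0).
Proof. by apply: funext => x; exact: derive_cst. Qed.

Lemma derive_add_fun (W : normedModType R) (f g : V -> W) v :
  (forall x, differentiable f x) -> (forall x, differentiable g x) ->
  (fun x => derive (fun y => f y + g y) x v) = (fun x => derive f x v + derive g x v).
Proof.
by move=> df dg; apply: funext => x; rewrite -deriveD //; exact: diff_derivable.
Qed.

Lemma derive_mul_fun (f g : V -> R) v :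
  (forall x, differentiable f x) -> (forall x, differentiable g x) ->
  (fun x => derive (fun y => f y * g y) x v) =
  (fun x => f x * derive g x v + g x * derive f x v).
Proof.
move=> df dg; apply: funext => x.
by rewrite [LHS](_ : _ = 'D_v (f * g) x) // deriveM //; exact: diff_derivable.
Qed.

Lemma derive_coord (s : V -> V) v j :
  (forall x, differentiable s x) ->
  (fun x => derive (fun y => s y 0 j) x v) = (fun x => derive s x v 0 j).
Proof.
by move=> ds; apply: funext => x; rewrite derive_mx ?mxE //; exact: diff_derivable.
Qed.

Lemma Ck_cst (W : normedModType R) n (c : W) : Ck n (fun _ : V => c).
Proof.
elim: n c => [|n IH] c; first by move=> x; exact: cst_continuous.
by split=> [x|v]; [exact: differentiable_cst | rewrite derive_cst_fun].
Qed.

Lemma Ck_add (W : normedModType R) n (f g : V -> W) :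
  Ck n f -> Ck n g -> Ck n (fun x => f x + g x).
Proof.
elim: n f g => [|n IH] f g cf cg.
  by move=> x; exact: continuousD (cf x) (cg x).
split=> [x|v]; first exact: differentiableD (Ck_differentiable cf x) (Ck_differentiable cg x).
rewrite derive_add_fun; [|exact: Ck_differentiable cf|exact: Ck_differentiable cg].
by apply: IH; apply: Ck_derive.
Qed.

Lemma Ck_mul n (f g : V -> R) : Ck n f -> Ck n g -> Ck n (fun x => f x * g x).
Proof.
elim: n f g => [|n IH] f g cf cg.
  by move=> x; exact: continuousM (cf x) (cg x).
split=> [x|v]; first exact: differentiableM (Ck_differentiable cf x) (Ck_differentiable cg x).
rewrite derive_mul_fun; [|exact: Ck_differentiable cf|exact: Ck_differentiable cg].
by apply: Ck_add; apply: IH; by [apply: CkW | apply: Ck_derive].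
Qed.

Lemma Ck_coord n (s : V -> V) j : Ck n s -> Ck n (fun x => s x 0 j).
Proof.
elim: n s => [|n IH] s cs.
  by move=> x; exact: continuous_comp (cs x) (@coord_continuous R _ _ 0 j (s x)).
split=> [x|v].
  exact: differentiable_comp (Ck_differentiable cs x) (differentiable_coord _ 0 j).
by rewrite derive_coord; [apply: IH; apply: Ck_derive | exact: Ck_differentiable cs].
Qed.

(* S is the whole space for the norm estimates and the exterior of a large ball for the
   decay at infinity. *)
Definition wbounded (W : normedModType R) (nW : W -> R) (S : set V) (beta M : R)
    (n : nat) (g : V -> W) :=
  forall hs x, (size hs <= n)%N -> all (fun h => enorm h <= 1) hs -> S x ->
    nW (iderive g hs x) <= M * wgt (beta - (size hs)%:R) x.

Section Wbounded.
Variables (W : normedModType R) (nW : W -> R) (S : set V).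

Lemma wbounded0 beta M g :
  (forall x, S x -> nW (g x) <= M * wgt beta x) -> wbounded nW S beta M 0 g.
Proof. by move=> H hs x; rewrite leqn0 => /eqP/size0nil -> _ Sx; rewrite subr0; exact: H. Qed.

Lemma wboundedS beta M n g :
  (forall x, S x -> nW (g x) <= M * wgt beta x) ->
  (forall v, enorm v <= 1 -> wbounded nW S (beta - 1) M n (fun x => derive g x v)) ->
  wbounded nW S beta M n.+1 g.
Proof.
move=> H0 H1 hs x; case/lastP: hs => [_ _ Sx|hs v]; first by rewrite subr0; exact: H0.
rewrite size_rcons ltnS all_rcons iderive_rcons subr_natS => hn /andP[vu hu] Sx.
exact: H1.
Qed.

Lemma wbounded_derive beta M n g v :
  wbounded nW S beta M n.+1 g -> enorm v <= 1 ->
  wbounded nW S (beta - 1) M n (fun x => derive g x v).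
Proof.
move=> H vu hs x hn hu Sx; rewrite -iderive_rcons -subr_natS.
by have := H (rcons hs v) x; rewrite size_rcons all_rcons vu hu ltnS; apply.
Qed.

Lemma wbounded_val beta M n g x :
  wbounded nW S beta M n g -> S x -> nW (g x) <= M * wgt beta x.
Proof. by move=> H Sx; have := H [::] x (leq0n _) isT Sx; rewrite subr0. Qed.

Lemma wbounded_le beta M m n g :
  (m <= n)%N -> wbounded nW S beta M n g -> wbounded nW S beta M m g.
Proof. by move=> mn H hs x hm; apply: H; exact: leq_trans hm mn. Qed.

End Wbounded.

Local Notation wboundedR := (@wbounded R Num.norm).

Lemma wbounded_zero S beta M n : 0 <= M -> wboundedR S beta M n (fun _ => 0).
Proof.
move=> M0; have zero_le (x : V) beta' : `|0 : R| <= M * wgt beta' x.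
  by rewrite normr0 mulr_ge0 ?wgt_ge0.
elim: n beta => [|n IH] beta; first exact: wbounded0.
by apply: wboundedS => // v _; rewrite derive_cst_fun.
Qed.

Lemma wbounded_cst S n (c : R) : wboundedR S 0 `|c| n (fun _ => c).
Proof.
have cst_le (x : V) : `|c| <= `|c| * wgt 0 x by rewrite wgt0 mulr1.
case: n => [|n]; first exact: wbounded0.
apply: wboundedS => // v _; rewrite derive_cst_fun; exact: wbounded_zero.
Qed.

Lemma wbounded_add S beta A B n (f g : V -> R) : Ck n f -> Ck n g ->
  wboundedR S beta A n f -> wboundedR S beta B n g ->
  wboundedR S beta (A + B) n (fun x => f x + g x).
Proof.
elim: n beta f g => [|n IH] beta f g cf cg bf bg;
  have val_le (x : V) : S x -> `|f x + g x| <= (A + B) * wgt beta x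
    by move=> Sx; rewrite mulrDl (le_trans (ler_normD _ _)) // lerD //;
      [exact: wbounded_val bf Sx | exact: wbounded_val bg Sx].
  exact: wbounded0.
apply: wboundedS => // v vu.
rewrite derive_add_fun; [|exact: Ck_differentiable cf|exact: Ck_differentiable cg].
by apply: IH; [apply: Ck_derive|apply: Ck_derive|apply: wbounded_derive..].
Qed.

Lemma wbounded_mul S b1 b2 M1 M2 n (u g : V -> R) : Ck n u -> Ck n g ->
  wboundedR S b1 M1 n u -> wboundedR S b2 M2 n g ->
  wboundedR S (b1 + b2) (2 ^+ n * (M1 * M2)) n (fun x => u x * g x).
Proof.
elim: n b1 b2 M1 M2 u g => [|n IH] b1 b2 M1 M2 u g cu cg bu bg;
  have val_le (x : V) : S x -> `|u x * g x| <= M1 * M2 * wgt (b1 + b2) x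
    by move=> Sx; rewrite normrM -wgtD mulrACA ler_pM ?normr_ge0 //;
      [exact: wbounded_val bu Sx | exact: wbounded_val bg Sx].
  by apply: wbounded0 => x Sx; rewrite expr0 mul1r; exact: val_le.
apply: wboundedS => [x Sx|v vu].
  rewrite -mulrA; apply: le_trans (val_le x Sx) _; apply: ler_peMl.
    exact: le_trans (normr_ge0 _) (val_le x Sx).
  by rewrite exprn_ege1 // ler1n.
rewrite derive_mul_fun; [|exact: Ck_differentiable cu|exact: Ck_differentiable cg].
rewrite exprS mulrDl mul1r mulrDl {2}(mulrC M1).
apply: wbounded_add; try by apply: Ck_mul; by [apply: CkW | apply: Ck_derive].
- rewrite (_ : b1 + b2 - 1 = b1 + (b2 - 1)); last lra.
  by apply: IH; [apply: CkW | apply: Ck_derive | apply: wbounded_le bu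
                 | apply: wbounded_derive].
- rewrite (_ : b1 + b2 - 1 = b2 + (b1 - 1)); last lra.
  by apply: IH; [apply: CkW | apply: Ck_derive | apply: wbounded_le bg
                 | apply: wbounded_derive].
Qed.

Lemma coord_le (v : V) j : `|v 0 j| <= enorm v.
Proof.
rewrite /enorm -sqrtr_sqr ler_sqrt; last by rewrite sumr_ge0 // => i _; rewrite sqr_ge0.
by rewrite (bigD1 j) //= ler_wpDr // sumr_ge0 // => i _; rewrite sqr_ge0.
Qed.

Lemma enorm_delta_le1 j : enorm ('e_j : V) <= 1.
Proof.
rewrite /enorm (bigD1 j) //= big1 => [|i /negbTE ij]; last by rewrite !mxE ij andbF expr0n.
by rewrite !mxE !eqxx /= expr1n addr0 sqrtr1.
Qed.

Lemma wbounded_coord S beta M n (s : V -> V) j : Ck n s ->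
  wbounded (@enorm R k) S beta M n s -> wboundedR S beta M n (fun x => s x 0 j).
Proof.
have val_le beta' M' n' (s' : V -> V) x :
    wbounded (@enorm R k) S beta' M' n' s' -> S x -> `|s' x 0 j| <= M' * wgt beta' x.
  by move=> bs Sx; apply: le_trans (coord_le _ _) (wbounded_val bs Sx).
elim: n beta s => [|n IH] beta s cs bs; first by apply: wbounded0 => x; exact: val_le bs.
apply: wboundedS => [x|v vu]; first exact: val_le bs.
rewrite derive_coord; last exact: Ck_differentiable cs.
by apply: IH; [apply: Ck_derive | apply: wbounded_derive].
Qed.

Definition wCk S beta M n (g : V -> R) := Ck n g /\ wboundedR S beta M n g.

Lemma wCk_cst S n (c : R) : wCk S 0 `|c| n (fun _ => c).
Proof. by split; [exact: Ck_cst | exact: wbounded_cst]. Qed.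

Lemma wCk_add S beta A B n f g : wCk S beta A n f -> wCk S beta B n g ->
  wCk S beta (A + B) n (fun x => f x + g x).
Proof. by move=> [cf bf] [cg bg]; split; [exact: Ck_add | exact: wbounded_add]. Qed.

Lemma wCk_mul S b1 b2 M1 M2 n u g : wCk S b1 M1 n u -> wCk S b2 M2 n g ->
  wCk S (b1 + b2) (2 ^+ n * (M1 * M2)) n (fun x => u x * g x).
Proof. by move=> [cu bu] [cg bg]; split; [exact: Ck_mul | exact: wbounded_mul]. Qed.

Lemma wCk_sum m S beta M n (F : 'I_m -> V -> R) :
  (forall i, wCk S beta M n (F i)) ->
  wCk S beta (m%:R * M) n (fun x => \sum_(i < m) F i x).
Proof.
elim: m F => [|m IH] F HF.
  under eq_fun do rewrite big_ord0.
  by rewrite mul0r; split; [exact: Ck_cst | exact: wbounded_zero].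
under eq_fun do rewrite big_ord_recr.
by rewrite -[m.+1%:R]natr1 mulrDl mul1r; apply: wCk_add => //; exact: IH.
Qed.

Lemma derive_row_delta (f : V -> R) x v : differentiable f x ->
  derive f x v = \sum_(j < k) v 0 j * derive f x ('e_j : V).
Proof.
move=> df; rewrite deriveE // {1}(row_sum_delta v) linear_sum.
by apply: eq_bigr => j _; rewrite linearZ /= deriveE.
Qed.

Lemma derive_sumZ m (c : 'I_m -> R) (F : 'I_m -> V -> R) x v :
  (forall j, derivable (F j) x v) ->
  derive (fun y => \sum_(j < m) c j * F j y) x v = \sum_(j < m) c j * derive (F j) x v.
Proof.
move=> dF; have -> : (fun y => \sum_(j < m) c j * F j y) = \sum_(j < m) (c j \*o F j).
  by apply: funext => y; rewrite fct_sumE.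
rewrite derive_sum => [|j]; last exact: derivableM (derivable_cst (c j) x v) (dF j).
by apply: eq_bigr => j _; rewrite deriveMl.
Qed.

Definition partial (f : V -> R) j := fun y => derive f y ('e_j : V).
Definition partial2 (f : V -> R) i j := fun y => derive (partial f j) y ('e_i : V).

Lemma LgenE d (b : V -> V) (sig : 'I_d -> V -> V) f : Ck 2 f ->
  Lgen b sig f = fun x => \sum_(j < k) b x 0 j * partial f j x + 2^-1 *
    \sum_(l < d) \sum_(j < k) (sig l x 0 j * \sum_(i < k) (sig l x 0 i * partial2 f i j x)).
Proof.
move=> cf; apply: funext => x; rewrite /Lgen.
have df := Ck_differentiable cf; have ddf v := Ck_differentiable (Ck_derive v cf).
congr (_ + 2^-1 * _); first exact: derive_row_delta.
apply: eq_bigr => l _ /=.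
under eq_fun do rewrite derive_row_delta //.
rewrite derive_sumZ => [|j]; last exact: diff_derivable.
by apply: eq_bigr => j _; rewrite derive_row_delta.
Qed.

(* The constant that wCk_mul and wCk_sum produce on the coordinate form LgenE. *)
Definition Lgen_const (d n : nat) (Kp : R) : R :=
  k%:R * 2 ^+ n * Kp + 2 ^+ n * 2^-1 * d%:R * (k%:R * 2 ^+ n * Kp) ^+ 2.

Lemma Lgen_const_ge0 d n Kp : 0 <= Kp -> 0 <= Lgen_const d n Kp.
Proof. by move=> Kp0; rewrite addr_ge0 ?mulr_ge0 ?exprn_ge0 ?sqr_ge0 ?invr_ge0. Qed.

Lemma wCk_Lgen d (b : V -> V) (sig : 'I_d -> V -> V) Kp n S beta M f :
  (forall j, wCk S 1 Kp n (fun x => b x 0 j)) ->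
  (forall l j, wCk S 1 Kp n (fun x => sig l x 0 j)) ->
  Ck n.+2 f -> wboundedR S beta M n.+2 f ->
  wCk S beta (Lgen_const d n Kp * M) n (Lgen b sig f).
Proof.
move=> Hb Hs cf bf; rewrite (LgenE _ _ (Ck_le (isT : (2 <= n.+2)%N) cf)).
have D1 j : wCk S (beta - 1) M n (partial f j).
  split; first exact: CkW (Ck_derive _ cf).
  exact: wbounded_le (leqnSn _) (wbounded_derive bf (enorm_delta_le1 j)).
have D2 i j : wCk S (beta - 1 - 1) M n (partial2 f i j).
  split; first exact: Ck_derive (Ck_derive _ cf).
  exact: wbounded_derive (wbounded_derive bf (enorm_delta_le1 j)) (enorm_delta_le1 i).
have T1 := wCk_sum (fun j => wCk_mul (Hb j) (D1 j)).
have T2 := wCk_mul (wCk_cst S n 2^-1) (wCk_sum (fun l => wCk_sum (fun j =>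
  wCk_mul (Hs l j) (wCk_sum (fun i => wCk_mul (Hs l i) (D2 i j)))))).
rewrite (_ : 1 + (beta - 1) = beta) in T1; last lra.
rewrite (_ : 0 + (1 + (1 + (beta - 1 - 1))) = beta) in T2; last lra.
rewrite (_ : Lgen_const d n Kp * M = k%:R * (2 ^+ n * (Kp * M)) + 2 ^+ n * (`|2^-1| *
  (d%:R * (k%:R * (2 ^+ n * (Kp * (k%:R * (2 ^+ n * (Kp * M))))))))); last first.
  by rewrite /Lgen_const ger0_norm ?invr_ge0 //; ring.
exact: wCk_add T1 T2.
Qed.

Lemma Dnorm_ge_iderive (W : normedModType R) (nW : W -> R) (f : V -> W) hs x :
  all (fun h => enorm h <= 1) hs -> ((nW (iderive f hs x))%:E <= Dnorm nW (size hs) f x)%E.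
Proof. by move=> hu; apply: ereal_sup_ubound; exists hs. Qed.

Lemma wbounded_Dnorm (W : normedModType R) (nW : W -> R) S beta M n g j x :
  wbounded nW S beta M n g -> (j <= n)%N -> S x ->
  (Dnorm nW j g x <= (M * wgt (beta - j%:R) x)%:E)%E.
Proof.
move=> H jn Sx; apply/ereal_supP => _ [hs [hsj hu] <-].
by rewrite lee_fin; subst j; exact: H.
Qed.

Lemma wbounded_wnorm_le beta M n g :
  wboundedR setT beta M n g -> (wnorm beta n g <= M%:E)%E.
Proof.
move=> H; apply/ereal_supP => _ [j [x [jn ->]]].
have wj := wgt_gt0 (beta - j%:R) x.
apply: le_trans (lee_wpmul2r _ (wbounded_Dnorm H jn (I : setT x))) _.
  by rewrite lee_fin invr_ge0 ltW.
by rewrite -EFinM lee_fin mulfK // gt_eqF.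
Qed.

Lemma wnorm_ge_iderive beta n (f : V -> R) hs x : (size hs <= n)%N ->
  all (fun h => enorm h <= 1) hs ->
  ((`|iderive f hs x| / wgt (beta - (size hs)%:R) x)%:E <= wnorm beta n f)%E.
Proof.
move=> hn hu; rewrite EFinM.
apply: le_trans (lee_wpmul2r _ (Dnorm_ge_iderive Num.norm f x hu)) _.
  by rewrite lee_fin invr_ge0 wgt_ge0.
by apply: ereal_sup_ubound; exists (size hs), x.
Qed.

Lemma wnorm_ge0 beta n (f : V -> R) : (0 <= wnorm beta n f)%E.
Proof.
apply: le_trans (@wnorm_ge_iderive beta n f [::] 0 (leq0n n) isT).
by rewrite lee_fin divr_ge0 ?wgt_ge0.
Qed.

Lemma wnorm_fin_num beta n (f : V -> R) :
  (wnorm beta n f < +oo)%E -> wnorm beta n f \is a fin_num.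
Proof. by rewrite ge0_fin_numE ?wnorm_ge0. Qed.

Lemma wnorm_wbounded beta n (f : V -> R) : (wnorm beta n f < +oo)%E ->
  wboundedR setT beta (fine (wnorm beta n f)) n f.
Proof.
move=> /wnorm_fin_num fW hs x hn hu _.
by rewrite -ler_pdivrMr ?wgt_gt0 // -lee_fin fineK // wnorm_ge_iderive.
Qed.

Lemma decay_wbounded n beta (f : V -> R) eps :
  (forall j, (j <= n)%N -> forall eps, 0 < eps -> exists M : R, forall x : V,
     M <= enorm x -> (Dnorm Num.norm j f x <= (eps * wgt (beta - j%:R) x)%:E)%E) ->
  0 < eps -> exists M0, wboundedR [set x | M0 <= enorm x] beta eps n f.
Proof.
move=> dec e0.
suff [M0 HM0] : exists M0, forall j, (j <= n)%N -> forall x : V, M0 <= enorm x ->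
    (Dnorm Num.norm j f x <= (eps * wgt (beta - j%:R) x)%:E)%E.
  exists M0 => hs x hn hu Sx; rewrite -lee_fin.
  exact: le_trans (Dnorm_ge_iderive _ _ _ hu) (HM0 _ hn _ Sx).
elim: n dec => [|n IH] dec.
  have [M HM] := dec 0%N (leqnn 0) eps e0.
  by exists M => j; rewrite leqn0 => /eqP ->.
have [M1 HM1] := IH (fun j jn => dec j (leqW jn)).
have [M2 HM2] := dec n.+1 (leqnn _) eps e0.
exists (Num.max M1 M2) => j; rewrite leq_eqVlt => /orP[/eqP -> | jn] x;
  rewrite ge_max => /andP[h1 h2]; [exact: HM2 | exact: HM1].
Qed.

Lemma WRcoef_wCk r K (s : V -> V) n S j : WRcoef r K s -> (n <= r + 4)%N ->
  wCk S 1 `|K| n (fun x => s x 0 j).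
Proof.
move=> [cs [bs _]] nr; have csn := Ck_le nr cs.
split; first exact: Ck_coord.
apply: wbounded_coord => // hs x hn hu _.
have := le_trans (Dnorm_ge_iderive (@enorm R k) s x hu) (bs (size hs) x (leq_trans hn nr)).
by rewrite lee_fin => /le_trans; apply; rewrite ler_wpM2r ?wgt_ge0 ?ler_norm.
Qed.

Section Generator.
Variables (d r : nat) (K : R) (b : V -> V) (sig : 'I_d -> V -> V).
Hypotheses (WRb : WRcoef r K b) (WRsig : forall l, WRcoef r K (sig l)).
Local Notation L := (Lgen b sig).
Local Notation c n := (Lgen_const d n `|K|).

Lemma wCk_Lgen_WR n S beta M f : (n <= r + 2)%N ->
  Ck (n + 2) f -> wboundedR S beta M (n + 2) f -> wCk S beta (c n * M) n (L f).
Proof.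
move=> nr; have nr4 : (n <= r + 4)%N by apply: leq_trans nr _; rewrite leq_add2l.
rewrite addn2; apply: wCk_Lgen => [j|l j]; exact: WRcoef_wCk nr4.
Qed.

Lemma wnorm_Lgen_le alpha n f : (n <= r + 2)%N ->
  Ck (n + 2) f -> (wnorm alpha (n + 2) f < +oo)%E ->
  Ck n (L f) /\ (wnorm alpha n (L f) <= (c n)%:E * wnorm alpha (n + 2) f)%E.
Proof.
move=> nr cf fin; have [cL bL] := wCk_Lgen_WR nr cf (wnorm_wbounded fin).
split=> //; apply: le_trans (wbounded_wnorm_le bL) _.
by rewrite EFinM fineK // wnorm_fin_num.
Qed.

Lemma wnorm_Lgen_lt_pinfty alpha n f : (n <= r + 2)%N ->
  Ck (n + 2) f -> (wnorm alpha (n + 2) f < +oo)%E -> (wnorm alpha n (L f) < +oo)%E.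
Proof.
move=> nr cf fin; have [_ bL] := wnorm_Lgen_le nr cf fin.
by apply: le_lt_trans bL _; rewrite -(fineK (wnorm_fin_num fin)) -EFinM ltry.
Qed.

Lemma Cspace_Lgen alpha n f : (n <= r + 2)%N ->
  Cspace alpha (n + 2) f -> Cspace alpha n (L f).
Proof.
move=> nr [cf [fin dec]]; split; first by case: (wnorm_Lgen_le nr cf fin).
split; first exact: wnorm_Lgen_lt_pinfty.
move=> j jn eps e0.
have cS_gt0 : 0 < c n + 1 by rewrite ltr_wpDl ?Lgen_const_ge0.
have [M0 BM] := decay_wbounded dec (divr_gt0 e0 cS_gt0).
have [_ bM] := wCk_Lgen_WR nr cf BM.
exists M0 => x hx; apply: le_trans (wbounded_Dnorm bM jn hx) _.
rewrite lee_fin ler_wpM2r ?wgt_ge0 // mulrA ler_pdivrMr //.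
by have := Lgen_const_ge0 d n (normr_ge0 K); nra.
Qed.

End Generator.
End WeightedBounds.

Theorem lemma18 (R : realType) (k d : nat) (alpha : R) (r : nat)
  (b : 'rV[R]_k -> 'rV[R]_k) (sig : 'I_d -> 'rV[R]_k -> 'rV[R]_k)
  (HWR : exists K : R, WRcoef r K b /\ forall l : 'I_d, WRcoef r K (sig l)) :
  exists C : R, 0 < C /\
    (forall f : 'rV[R]_k -> R, Cspace alpha (r + 4) f ->
       (wnorm alpha (r + 2) (Lgen b sig f)
        + wnorm alpha r (Lgen b sig (Lgen b sig f))
        <= C%:E * wnorm alpha (r + 4) f)%E) /\
    (forall f : 'rV[R]_k -> R, Cspace alpha (r + 2) f ->
       Cspace alpha r (Lgen b sig f) /\
       (wnorm alpha r (Lgen b sig f) <= C%:E * wnorm alpha (r + 2) f)%E).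
Proof.
case: HWR => K [WRb WRsig].
set c0 := Lgen_const k d r `|K|; set c1 := Lgen_const k d (r + 2) `|K|.
have c0_ge0 : 0 <= c0 by apply: Lgen_const_ge0.
have c1_ge0 : 0 <= c1 by apply: Lgen_const_ge0.
have c01_ge0 := mulr_ge0 c0_ge0 c1_ge0.
exists (c1 + c0 * c1 + c0 + 1); split; first lra.
split=> [f [cf [fin _]] | f Cf].
  have e4 : (r + 4 = r + 2 + 2)%N by rewrite -addnA.
  rewrite e4 in cf fin *.
  have [cL bL] := wnorm_Lgen_le WRb WRsig (leqnn _) cf fin.
  have [_ bLL] := wnorm_Lgen_le WRb WRsig (leq_addr 2 r) cL
    (wnorm_Lgen_lt_pinfty WRb WRsig (leqnn _) cf fin).
  apply: le_trans (leeD bL (le_trans bLL (lee_wpmul2l _ bL))) _; first by rewrite lee_fin.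
  have fW := wnorm_fin_num fin.
  have W0 : 0 <= fine (wnorm alpha (r + 2 + 2) f) by rewrite fine_ge0 ?wnorm_ge0.
  rewrite -(fineK fW) -!EFinM -EFinD lee_fin -/c0 -/c1; nra.
have [cf [fin _]] := Cf; have [_ bL] := wnorm_Lgen_le WRb WRsig (leq_addr 2 r) cf fin.
split; first exact: (Cspace_Lgen WRb WRsig (leq_addr 2 r) Cf).
by apply: le_trans bL (lee_wpmul2r (wnorm_ge0 _ _ _) _); rewrite lee_fin -/c0; lra.
Qed.
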